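(* Let $$y=\frac{(2s^2-1)(3s-1)}{2s(2s^2+2s-1)(s-1)},\qquad t=-\frac{(3s-1)^2}{8(2s^2+2s-1)(s-1)s^3}.$$ Then $y(t)$ is a solution of $\mathrm{P}_{\mathrm{VI}}$ with parameters $(\theta_1,\theta_2,\theta_3,\theta_4)=(1/3,3/4,1/3,3/4)$.
   Context: $\mathrm{P}_{\mathrm{VI}}$ is the equation $$\frac{d^2y}{dt^2}=\frac12\Big(\frac1y+\frac1{y-1}+\frac1{y-t}\Big)\Big(\frac{dy}{dt}\Big)^2-\Big(\frac1t+\frac1{t-1}+\frac1{y-t}\Big)\frac{dy}{dt}+\frac{y(y-1)(y-t)}{t^2(t-1)^2}\Big(\alpha+\beta\frac{t}{y^2}+\gamma\frac{t-1}{(y-1)^2}+\delta\frac{t(t-1)}{(y-t)^2}\Big),$$ with $\alpha=(\theta_4-1)^2/2$, $\beta=-\theta_1^2/2$, $\gamma=\theta_3^2/2$, $\delta=(1-\theta_2^2)/2$. When $y,t$ are given as rational functions of a parameter on a curve, derivatives with respect to $t$ are computed via the chain rule. *)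

From Stdlib Require Import Reals.
From Coquelicot Require Import Coquelicot.
Open Scope R_scope.

Definition pvi_alpha (th4 : R) : R := (th4 - 1) ^ 2 / 2.
Definition pvi_beta (th1 : R) : R := - th1 ^ 2 / 2.
Definition pvi_gamma (th3 : R) : R := th3 ^ 2 / 2.
Definition pvi_delta (th2 : R) : R := (1 - th2 ^ 2) / 2.

Definition PVI_rhs (th1 th2 th3 th4 t y y1 : R) : R :=
  / 2 * (/ y + / (y - 1) + / (y - t)) * y1 ^ 2
  - (/ t + / (t - 1) + / (y - t)) * y1
  + y * (y - 1) * (y - t) / (t ^ 2 * (t - 1) ^ 2)
    * (pvi_alpha th4 + pvi_beta th1 * t / y ^ 2
       + pvi_gamma th3 * (t - 1) / (y - 1) ^ 2
       + pvi_delta th2 * t * (t - 1) / (y - t) ^ 2).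

(* Parametric derivatives via the chain rule: for a curve s |-> (t s, y s),
   dy/dt = y'(s)/t'(s) and d^2y/dt^2 = (d/ds (y'/t'))(s) / t'(s). *)
Definition dydt (y t : R -> R) (s : R) : R := Derive y s / Derive t s.
Definition d2ydt2 (y t : R -> R) (s : R) : R :=
  Derive (dydt y t) s / Derive t s.

Definition y7 (s : R) : R :=
  (2 * s ^ 2 - 1) * (3 * s - 1) / (2 * s * (2 * s ^ 2 + 2 * s - 1) * (s - 1)).
Definition t7 (s : R) : R :=
  - (3 * s - 1) ^ 2 / (8 * (2 * s ^ 2 + 2 * s - 1) * (s - 1) * s ^ 3).

(* Along the curve, dy/dt = y'/t' and the
   quotient rule gives d^2y/dt^2 = (y'' t' - y' t'')/t'^3 in terms of the
   s-derivatives, which are explicit rational functions of s.  Substituting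
   them, both sides of P_VI become rational functions of s and agree. *)

From Stdlib Require Import Reals Lra.
From Coquelicot Require Import Coquelicot.
Open Scope R_scope.

Lemma locally_neq_0 (f : R -> R) (s : R) :
  continuous f s -> f s <> 0 -> locally s (fun x => f x <> 0).
Proof.
  intros Hf Hs.
  apply (Hf (fun u => u <> 0)).
  apply (locally_open (fun u => u <> 0)); [apply open_neq | easy | exact Hs].
Qed.

Lemma Rdiv_neq_0_num (a b : R) : a / b <> 0 -> a <> 0.
Proof. intros H Ha; apply H; rewrite Ha; unfold Rdiv; ring. Qed.

Lemma Rmult_neq_0_l (a b : R) : a * b <> 0 -> a <> 0.
Proof. intros H Ha; apply H; rewrite Ha; ring. Qed.

Lemma Rmult_neq_0_r (a b : R) : a * b <> 0 -> b <> 0.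
Proof. intros H Hb; apply H; rewrite Hb; ring. Qed.

Section ParametricDerivatives.

Variables (y t y1 t1 : R -> R) (s : R).
Hypothesis derive_near_s :
  locally s (fun x => is_derive y x (y1 x) /\ is_derive t x (t1 x)).

Lemma dydt_near : locally s (fun x => dydt y t x = y1 x / t1 x).
Proof.
  revert derive_near_s; apply filter_imp; intros x [Hy Ht]; unfold dydt.
  now rewrite (is_derive_unique _ _ _ Hy), (is_derive_unique _ _ _ Ht).
Qed.

Lemma dydt_eq : dydt y t s = y1 s / t1 s.
Proof. exact (locally_singleton _ _ dydt_near). Qed.

Lemma d2ydt2_eq (y2 t2 : R) :
  is_derive y1 s y2 -> is_derive t1 s t2 -> t1 s <> 0 ->
  d2ydt2 y t s = (y2 * t1 s - y1 s * t2) / t1 s ^ 3.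
Proof.
  intros Hy2 Ht2 Ht1.
  assert (Ht : Derive t s = t1 s).
  { apply is_derive_unique; exact (proj2 (locally_singleton _ _ derive_near_s)). }
  assert (Hd : is_derive (dydt y t) s ((y2 * t1 s - y1 s * t2) / t1 s ^ 2)).
  { apply (is_derive_ext_loc (fun x => y1 x / t1 x)).
    - apply (filter_imp _ _ (fun x Hx => eq_sym Hx) dydt_near).
    - now apply is_derive_div. }
  unfold d2ydt2; rewrite Ht, (is_derive_unique _ _ _ Hd).
  field; exact Ht1.
Qed.

End ParametricDerivatives.

Definition off_poles7 (s : R) : Prop :=
  s <> 0 /\ s - 1 <> 0 /\ 2 * s ^ 2 + 2 * s - 1 <> 0.

Lemma locally_off_poles7 (s : R) : off_poles7 s -> locally s off_poles7.
Proof.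
  intros (H0 & H1 & Hq).
  assert (Hc : forall f : R -> R, ex_derive f s -> continuous f s)
    by (intros f; apply (@ex_derive_continuous R_AbsRing R_NormedModule)).
  repeat apply filter_and.
  - apply (locally_neq_0 (fun x => x)); [apply Hc; auto_derive |]; easy.
  - apply (locally_neq_0 (fun x => x - 1)); [apply Hc; auto_derive |]; easy.
  - apply (locally_neq_0 (fun x => 2 * x ^ 2 + 2 * x - 1));
      [apply Hc; auto_derive |]; easy.
Qed.

Definition y7' (s : R) : R :=
  - (12 * s ^ 6 - 8 * s ^ 5 - 4 * s ^ 3 + 11 * s ^ 2 - 6 * s + 1)
  / (2 * s ^ 2 * (2 * s ^ 2 + 2 * s - 1) ^ 2 * (s - 1) ^ 2).
Definition t7' (s : R) : R :=
  3 * (3 * s - 1) * (8 * s ^ 4 - 4 * s ^ 3 - 6 * s ^ 2 + 5 * s - 1)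
  / (8 * s ^ 4 * (2 * s ^ 2 + 2 * s - 1) ^ 2 * (s - 1) ^ 2).
Definition y7'' (s : R) : R :=
  (24 * s ^ 9 - 24 * s ^ 8 + 36 * s ^ 7 - 56 * s ^ 6 + 78 * s ^ 5
   - 36 * s ^ 4 - 23 * s ^ 3 + 27 * s ^ 2 - 9 * s + 1)
  / (s ^ 3 * (2 * s ^ 2 + 2 * s - 1) ^ 3 * (s - 1) ^ 3).
Definition t7'' (s : R) : R :=
  - 3 * (120 * s ^ 8 - 120 * s ^ 7 - 134 * s ^ 6 + 216 * s ^ 5 - 9 * s ^ 4
         - 123 * s ^ 3 + 81 * s ^ 2 - 21 * s + 2)
  / (4 * s ^ 5 * (2 * s ^ 2 + 2 * s - 1) ^ 3 * (s - 1) ^ 3).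

Ltac derive_rational :=
  intros (H0 & H1 & Hq);
  auto_derive; [ repeat split; repeat apply Rmult_integral_contrapositive_currified;
                 auto using pow_nonzero; lra
               | field; repeat split; auto ].

Lemma is_derive_y7 (s : R) : off_poles7 s -> is_derive y7 s (y7' s).
Proof. unfold y7, y7'; derive_rational. Qed.

Lemma is_derive_t7 (s : R) : off_poles7 s -> is_derive t7 s (t7' s).
Proof. unfold t7, t7'; derive_rational. Qed.

Lemma is_derive_y7' (s : R) : off_poles7 s -> is_derive y7' s (y7'' s).
Proof. unfold y7', y7''; derive_rational. Qed.

Lemma is_derive_t7' (s : R) : off_poles7 s -> is_derive t7' s (t7'' s).
Proof. unfold t7', t7''; derive_rational. Qed.

Lemma y7_sub_1 (s : R) : off_poles7 s ->
  y7 s - 1 = - (4 * s ^ 4 - 6 * s ^ 3 - 4 * s ^ 2 + 5 * s - 1)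
             / (2 * s * (2 * s ^ 2 + 2 * s - 1) * (s - 1)).
Proof. intros (H0 & H1 & Hq); unfold y7; field; auto. Qed.

Lemma t7_sub_1 (s : R) : off_poles7 s ->
  t7 s - 1 = - (16 * s ^ 6 - 24 * s ^ 4 + 8 * s ^ 3 + 9 * s ^ 2 - 6 * s + 1)
             / (8 * s ^ 3 * (2 * s ^ 2 + 2 * s - 1) * (s - 1)).
Proof. intros (H0 & H1 & Hq); unfold t7; field; auto. Qed.

Lemma y7_sub_t7 (s : R) : off_poles7 s ->
  y7 s - t7 s = (3 * s - 1) * (8 * s ^ 4 - 4 * s ^ 2 + 3 * s - 1)
                / (8 * s ^ 3 * (2 * s ^ 2 + 2 * s - 1) * (s - 1)).
Proof. intros (H0 & H1 & Hq); unfold y7, t7; field; auto. Qed.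

Theorem mainTheorem7 (s : R) :
  s <> 0 -> s - 1 <> 0 -> 2 * s ^ 2 + 2 * s - 1 <> 0 ->
  t7 s <> 0 -> t7 s - 1 <> 0 ->
  y7 s <> 0 -> y7 s - 1 <> 0 -> y7 s - t7 s <> 0 ->
  Derive t7 s <> 0 ->
  d2ydt2 y7 t7 s =
  PVI_rhs (1/3) (3/4) (1/3) (3/4) (t7 s) (y7 s) (dydt y7 t7 s).
Proof.
  intros H0 H1 Hq _ Ht1 Hy0 Hy1 Hyt Hd.
  assert (Hs : off_poles7 s) by easy.
  assert (Hnear : locally s (fun x => is_derive y7 x (y7' x) /\ is_derive t7 x (t7' x))).
  { apply (filter_imp off_poles7); [| exact (locally_off_poles7 s Hs)].
    intros x Hx; split; [apply is_derive_y7 | apply is_derive_t7]; exact Hx. }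
  rewrite (is_derive_unique _ _ _ (is_derive_t7 s Hs)) in Hd.
  rewrite (d2ydt2_eq _ _ _ _ _ Hnear _ _ (is_derive_y7' s Hs) (is_derive_t7' s Hs) Hd),
    (dydt_eq _ _ _ _ _ Hnear).
  rewrite (y7_sub_1 s Hs) in Hy1; rewrite (t7_sub_1 s Hs) in Ht1;
  rewrite (y7_sub_t7 s Hs) in Hyt; unfold y7 in Hy0; unfold t7' in Hd.
  apply Rdiv_neq_0_num in Hy0, Hy1, Ht1, Hyt, Hd.
  apply Ropp_neq_0_compat in Hy1, Ht1; rewrite Ropp_involutive in Hy1, Ht1.
  (* Substituting the factored differences first makes the side conditions
     of [field] exactly the nonvanishing factors obtained above. *)
  unfold PVI_rhs; rewrite (y7_sub_1 s Hs), (t7_sub_1 s Hs), (y7_sub_t7 s Hs).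
  unfold y7, t7, y7', t7', y7'', t7'', pvi_alpha, pvi_beta, pvi_gamma, pvi_delta.
  field; repeat split; eauto using Rmult_neq_0_l, Rmult_neq_0_r.
Qed.
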